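(* Let $X$ be a scattered topological space such that $\mathrm{Homeo}(X)$ is fully transitive, and assume each similarity class of $X$ is infinite. Then $\mathrm{Homeo}(X)$ is topologically perfect.
   Context: A topological space (not assumed Hausdorff) is scattered if every nonempty subset has a point isolated in that subset. For scattered $X$, $\mathrm{Homeo}(X)$ carries the topology of pointwise convergence on $X$. Two points $x,y\in X$ are similar if there are neighbourhoods $U_x\ni x$, $U_y\ni y$ and a homeomorphism $h\colon U_x\to U_y$ with $h(x)=y$; the equivalence classes are similarity classes. $\mathrm{Homeo}(X)$ is fully transitive if for every $k$ and all $k$-tuples of pairwise distinct points $(x_1,\dots,x_k)$, $(y_1,\dots,y_k)$ with $x_i$ similar to $y_i$, some homeomorphism $g$ satisfies $g(x_i)=y_i$ for all $i$. A topological group is topologically perfect if its derived subgroup is dense. *)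

From HB Require Import structures.
From mathcomp Require Import all_boot all_order all_algebra.
From mathcomp Require Import all_classical all_reals all_analysis.
Set Implicit Arguments. Unset Strict Implicit. Unset Printing Implicit Defensive.
Local Open Scope classical_set_scope.

Definition scattered (X : topologicalType) : Prop :=
  forall A : set X, A !=set0 ->
    exists x, A x /\ exists W : set X, open W /\ W `&` A = [set x].

Definition is_homeo (X : topologicalType) (f : X -> X) : Prop :=
  continuous f /\ exists g : X -> X, [/\ cancel f g, cancel g f & continuous g].

Definition homeo_between (X : topologicalType) (U V : set X) (h : X -> X) : Prop :=
  exists g : X -> X,
    [/\ h @` U = V, g @` V = U,
        (forall u, U u -> g (h u) = u), (forall v, V v -> h (g v) = v) &
        ({within U, continuous h} /\ {within V, continuous g})].

Definition similar_pts (X : topologicalType) (x y : X) : Prop :=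
  exists (U V : set X) (h : X -> X),
    [/\ open U, U x, open V, V y & homeo_between U V h /\ h x = y].

Definition fully_transitive (X : topologicalType) : Prop :=
  forall (k : nat) (xs ys : 'I_k -> X),
    injective xs -> injective ys -> (forall i, similar_pts (xs i) (ys i)) ->
    exists g : X -> X, is_homeo g /\ forall i, g (xs i) = ys i.

(* The derived (commutator) subgroup of Homeo(X): finite products of
   commutators a b a^-1 b^-1 of homeomorphisms (inverses of commutators are
   commutators, so this is the subgroup they generate). *)
Inductive derived_homeo (X : topologicalType) : (X -> X) -> Prop :=
  | derived_id : derived_homeo id
  | derived_comm : forall (a a' b b' h : X -> X),
      continuous a -> continuous a' -> cancel a a' -> cancel a' a ->
      continuous b -> continuous b' -> cancel b b' -> cancel b' b ->
      derived_homeo h -> derived_homeo (a \o b \o a' \o b' \o h).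

(* Homeo(X), with the topology of pointwise convergence (subspace of the
   product topology {ptws X -> X}), is topologically perfect: its derived
   subgroup is dense in it. *)
Definition homeo_topologically_perfect (X : topologicalType) : Prop :=
  [set f : {ptws X -> X} | is_homeo f]
    `<=` closure [set f : {ptws X -> X} | derived_homeo f].

From mathcomp Require Import all_boot all_order all_algebra.
From mathcomp Require Import all_classical all_reals all_analysis.
Local Open Scope classical_set_scope.
Set Implicit Arguments.
Unset Strict Implicit.
Unset Printing Implicit Defensive.

(* Let f be a homeomorphism and x_1, ..., x_n finitely many points. Since
   similarity classes are infinite, there are fresh points u_i, v_i, w_i
   similar to x_i, all distinct and outside {x_i} and {f x_i}. Full
   transitivity makes similarity coincide with lying in the same
   Homeo(X)-orbit, an equivalence relation, and then yields homeomorphisms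
   b : u_i |-> x_i, v_i |-> w_i and a : v_i |-> u_i, w_i |-> f x_i. The
   commutator a b a^-1 b^-1 sends x_i to u_i, v_i, w_i and finally to f x_i.
   A basic neighbourhood of f in the pointwise topology only constrains
   finitely many values, so f lies in the closure of the derived subgroup. *)

Lemma ptws_closure_agree {T : eqType} {Y : topologicalType}
    (A : set (T -> Y)) (f : T -> Y) :
  (forall s : seq T, exists2 h, A h & {in s, h =1 f}) ->
  closure (A : set {ptws T -> Y}) f.
Proof.
move=> agreeA.
pose F := filter_from [set: seq T] (fun s => [set h : T -> Y | {in s, h =1 f}]).
have FF : Filter F.
  apply: filter_from_filter; first by exists [::].
  move=> s t _ _; exists (s ++ t) => // h hst.
  by split=> x xs; apply: hst; rewrite mem_cat xs ?orbT.
have Ff : F --> (f : {ptws T -> Y}).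
  apply/cvg_sup => x.
  have eval_surj : (fun g : T -> Y => g x) @` setT = setT.
    by rewrite eqEsubset; split => // y _; exists (cst y).
  apply/cvg_image => // B /= Bfx.
  exists ((fun g : T -> Y => g x) @^-1` B); last by rewrite image_preimage.
  by exists [:: x] => // h hx; rewrite /= hx ?mem_head //; exact: nbhs_singleton.
move=> B /Ff [s _ sB]; have [h Ah hf] := agreeA s.
by exists h; split => //; exact: sB.
Qed.

Lemma injective_fresh_choice {T : eqType} {J : finType} (C : J -> set T)
    (avoid : seq T) :
  (forall j, infinite_set (C j)) ->
  exists2 p : J -> T, injective p & forall j, C j (p j) /\ p j \notin avoid.
Proof.
move=> infC.
have fresh j (l : seq T) : exists z, C j z /\ z \notin l.
  have /infinite_setN0 [z [Cz /negP zl]] := infinite_setD (infC j) (finite_seq l).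
  by exists z.
suff [p Hp pinj] : exists2 p : J -> T,
    {in enum J, forall j, C j (p j) /\ p j \notin avoid} &
    {in enum J &, injective p}.
  by exists p => [i j|j]; [apply: pinj | apply: Hp]; rewrite mem_enum.
elim: (enum J) => [|j js [p Hp pinj]].
  by exists (fun j => projT1 (cid (fresh j avoid))).
have [z [Cz]] := fresh j (avoid ++ map p js).
rewrite mem_cat negb_or => /andP[za zp].
have zpk k : k \in js -> z <> p k by move=> kjs zk; rewrite zk map_f in zp.
exists (fun k => if k == j then z else p k) => [k|k1 k2]; rewrite !inE.
  by case: eqP => [-> _ // | _ /= /Hp].
case: (eqVneq k1 j) => [->|n1]; case: (eqVneq k2 j) => [->|n2] //= k1s k2s.
- by move/(zpk _ k2s).
- by move/esym/(zpk _ k1s).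
- exact: pinj.
Qed.

Definition sum_fun {I T : Type} (g1 g2 : I -> T) (q : I + I) : T :=
  match q with inl i => g1 i | inr i => g2 i end.

Lemma sum_fun_inj {I T : Type} (g1 g2 : I -> T) :
  injective g1 -> injective g2 -> (forall i j, g1 i <> g2 j) ->
  injective (sum_fun g1 g2).
Proof.
by move=> inj1 inj2 g12 [i|i] [j|j] /= => [/inj1 -> | /g12 | /esym/g12 | /inj2 ->].
Qed.

Section Homeomorphisms.
Variable X : topologicalType.

Lemma is_homeo_comp (f g : X -> X) :
  is_homeo f -> is_homeo g -> is_homeo (f \o g).
Proof.
move=> [cf [f' [ff' f'f cf']]] [cg [g' [gg' g'g cg']]].
split; first by move=> x; apply: continuous_comp; [exact: cg | exact: cf].
exists (g' \o f'); split => [x /=|x /=|x]; first by rewrite ff' gg'.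
  by rewrite g'g f'f.
by apply: continuous_comp; [exact: cf' | exact: cg'].
Qed.

Lemma homeo_similar_pts (g : X -> X) (p : X) :
  is_homeo g -> similar_pts p (g p).
Proof.
move=> [cg [g' [gg' g'g cg']]].
exists setT, setT, g; split => //; try exact: openT.
split => //; exists g'; split.
- by rewrite eqEsubset; split => // y _; exists (g' y).
- by rewrite eqEsubset; split => // y _; exists (g y).
- by move=> u _; rewrite gg'.
- by move=> v _; rewrite g'g.
- by split; exact: continuous_subspaceT.
Qed.

Definition homeo_orbit (p q : X) : Prop := exists2 g, is_homeo g & g p = q.

Lemma homeo_orbit_sym (p q : X) : homeo_orbit p q -> homeo_orbit q p.
Proof.
move=> [g [cg [g' [gg' g'g cg']]] <-].
by exists g' => //; split => //; exists g.
Qed.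

Lemma homeo_orbit_trans (p q r : X) :
  homeo_orbit p q -> homeo_orbit q r -> homeo_orbit p r.
Proof.
by move=> [g hg <-] [g2 hg2 <-]; exists (g2 \o g) => //; exact: is_homeo_comp.
Qed.

Hypothesis FT : fully_transitive X.

Lemma similar_homeo_orbit (p q : X) : similar_pts p q -> homeo_orbit p q.
Proof.
move=> spq.
have const_inj (z : X) : injective (fun _ : 'I_1 => z).
  by move=> i j _; rewrite (ord1 i) (ord1 j).
have [g [hg /(_ ord0) gpq]] := FT (const_inj p) (const_inj q) (fun=> spq).
by exists g.
Qed.

Lemma fully_transitive_fin (I : finType) (xs ys : I -> X) :
  injective xs -> injective ys -> (forall i, homeo_orbit (xs i) (ys i)) ->
  exists2 g, is_homeo g & forall i, g (xs i) = ys i.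
Proof.
move=> xinj yinj xy.
have [|||g [hg gE]] :=
  FT (xs := xs \o @enum_val I predT) (ys := ys \o @enum_val I predT).
- by move=> i j /xinj/enum_val_inj.
- by move=> i j /yinj/enum_val_inj.
- by move=> i /=; have [g hg <-] := xy (enum_val i); exact: homeo_similar_pts.
by exists g => // i; have := gE (enum_rank i); rewrite /= enum_rankK.
Qed.

Lemma commutator_moves (I : finType) (x y : I -> X) (p : I * 'I_3 -> X) :
  injective x -> injective y -> injective p ->
  (forall k i, p k <> x i /\ p k <> y i) ->
  (forall i c, homeo_orbit (x i) (p (i, c))) ->
  (forall i, homeo_orbit (x i) (y i)) ->
  exists2 h, derived_homeo h & forall i, h (x i) = y i.
Proof.
move=> xinj yinj pinj pfresh xp xy.
pose u i := p (i, @Ordinal 3 0 isT); pose v i := p (i, @Ordinal 3 1 isT).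
pose w i := p (i, @Ordinal 3 2 isT).
have pc_inj c : injective (fun i => p (i, c)) by move=> i j /pinj [].
have pc_neq c d i j : c != d -> p (i, c) <> p (j, d).
  by move=> cd /pinj [_ ecd]; rewrite ecd eqxx in cd.
have xu i : homeo_orbit (x i) (u i) := xp i _.
have xv i : homeo_orbit (x i) (v i) := xp i _.
have xw i : homeo_orbit (x i) (w i) := xp i _.
have [|||b hb bE] := @fully_transitive_fin _ (sum_fun u v) (sum_fun x w).
- apply: sum_fun_inj => [||i j]; try exact: pc_inj.
  exact: pc_neq.
- apply: sum_fun_inj => // [|i j /esym]; first exact: pc_inj.
  exact: (pfresh _ i).1.
- case=> i /=; first exact: homeo_orbit_sym (xu i).
  exact: homeo_orbit_trans (homeo_orbit_sym (xv i)) (xw i).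
have [|||a ha aE] := @fully_transitive_fin _ (sum_fun v w) (sum_fun u y).
- apply: sum_fun_inj => [||i j]; try exact: pc_inj.
  exact: pc_neq.
- apply: sum_fun_inj => // [|i j]; first exact: pc_inj.
  exact: (pfresh _ j).2.
- case=> i /=; first exact: homeo_orbit_trans (homeo_orbit_sym (xv i)) (xu i).
  exact: homeo_orbit_trans (homeo_orbit_sym (xw i)) (xy i).
case: ha => ca [a' [aa' a'a ca']]; case: hb => cb [b' [bb' b'b cb']].
exists (a \o b \o a' \o b' \o id); first exact: derived_comm (derived_id X).
move=> i; move: (bE (inl i)) (bE (inr i)) (aE (inl i)) (aE (inr i)).
by rewrite /= => bu bv av aw; rewrite -bu bb' -av aa' bv aw.
Qed.

Hypothesis similar_infinite :
  forall x : X, infinite_set [set y | similar_pts x y].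

Lemma derived_homeo_agree (f : X -> X) (s : seq X) : is_homeo f ->
  exists2 h, derived_homeo h & {in s, h =1 f}.
Proof.
move=> hf.
have finj : injective f by case: hf => _ [f' [ff' _ _]]; exact: can_inj ff'.
have orbit_infinite (k : seq_sub s * 'I_3) :
    infinite_set [set y | homeo_orbit (val k.1) y].
  apply: sub_infinite_set (@similar_infinite (val k.1)) => y.
  exact: similar_homeo_orbit.
have [p pinj pE] := injective_fresh_choice (s ++ map f s) orbit_infinite.
have [||||h hd hE] := @commutator_moves _ val (f \o val) p val_inj _ pinj.
- by move=> i j /finj/val_inj.
- move=> k i; have [_] := pE k; rewrite mem_cat negb_or => /andP[ps pfs].
  split=> [pki | pkfi]; first by move: ps; rewrite pki (valP i).
  by move: pfs; rewrite pkfi /= map_f ?(valP i).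
- by move=> i c; exact: (pE (i, c)).1.
- by move=> i; exists f.
by exists h => // z zs; exact: (hE (SeqSub zs)).
Qed.

End Homeomorphisms.

Theorem proposition17 (X : topologicalType) :
  scattered X -> fully_transitive X ->
  (forall x : X, ~ finite_set [set y | similar_pts x y]) ->
  homeo_topologically_perfect X.
Proof.
move=> _ FT similar_infinite f hf; apply: ptws_closure_agree => s.
exact: derived_homeo_agree.
Qed.
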